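(* Let $n\ge1$ and $u,v\in\mathcal S_n$. Then $u$ is strongly shift equivalent to $v$ if and only if $u\sim_{ss}v$.
   Context: $[n]=\{1,\ldots,n\}$; $\mathcal S_n$ is the set of permutations of $[n]$ as words. Rigid shift: for a word $u=u_1\cdots u_n$ over $\mathbb P$, an integer $h\ge0$ (cut height) and an integer $t$, suppose that for every $i$ with $u_i>h$ we have $1\le i+t\le n$ and $u_{i+t}\ge h$. Then the word $v$ with $v_j=\min(u_j,h)+\max(u_{j-t}-h,0)$ for $j\in[n]$ (the second term taken $0$ if $j-t\notin[n]$) is a rigid shift of $u$; geometrically, one cuts the skyline diagram of $u$ (columns of $u_i$ unit squares) at height $h$ and rigidly translates all squares above the cut horizontally by $t$ so each moved column rests on a column of height $h$. Two permutations are strongly shift equivalent if one can be obtained from the other by a finite sequence of rigid shifts. Super-strong Wilf equivalence: for finite words $u,w$ over $\mathbb P$, $j$ is an embedding index of $u$ in $w$ if $j+|u|-1\le|w|$ and $u_k\le w_{j+k-1}$ for all $k$; $Em(u,w)$ is the set of such $j$; $u\sim_{ss}v$ if there is a bijection $f$ of the set of finite words over $\mathbb P$ preserving length and sum of letters with $Em(u,w)=Em(v,f(w))$ for all $w$. *)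

From mathcomp Require Import all_boot all_order all_algebra.
Set Implicit Arguments. Unset Strict Implicit. Unset Printing Implicit Defensive.
Import Order.TTheory GRing.Theory Num.Theory.

(* Words are [seq nat]; positions are 0-based internally (position i here is
   position i+1 in the paper). *)

(* letter of u at (0-based, integer) position k; 0 if k is out of range *)
Definition letter_at (u : seq nat) (k : int) : nat :=
  match k with Posz m => nth 0 u m | Negz _ => 0 end.

Definition rigid_shift_ok (u : seq nat) (h : nat) (t : int) : Prop :=
  forall i : nat, (i < size u)%N -> (h < nth 0 u i)%N ->
    ((0 <= i%:Z + t)%R /\ (i%:Z + t < (size u)%:Z)%R) /\
    (h <= letter_at u (i%:Z + t))%N.

(* v_j = min(u_j,h) + max(u_{j-t} - h, 0)  (truncated subtraction = max(.,0)) *)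
Definition rigid_shift (u : seq nat) (h : nat) (t : int) : seq nat :=
  mkseq (fun j => minn (nth 0 u j) h + (letter_at u (j%:Z - t) - h)) (size u).

Definition is_rigid_shift (u v : seq nat) : Prop :=
  exists (h : nat) (t : int), rigid_shift_ok u h t /\ v = rigid_shift u h t.

Inductive strongly_shift_equiv : seq nat -> seq nat -> Prop :=
| sse_refl u : strongly_shift_equiv u u
| sse_step u w v : is_rigid_shift u w -> strongly_shift_equiv w v ->
                   strongly_shift_equiv u v.

Definition is_perm_word (n : nat) (u : seq nat) : Prop := perm_eq u (iota 1 n).

Definition pword := {w : seq nat | all (fun x => 0 < x)%N w}.

(* embedding indices (1-based, as in the paper) *)
Definition Em (u w : seq nat) : nat -> bool := fun j =>
  [&& (1 <= j)%N, (j + size u - 1 <= size w)%N &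
      all (fun k => nth 0 u k <= nth 0 w (j + k - 1))%N (iota 0 (size u))].

Definition ss_wilf_equiv (u v : seq nat) : Prop :=
  exists f : pword -> pword,
    bijective f /\
    (forall w, size (val (f w)) = size (val w)) /\
    (forall w, sumn (val (f w)) = sumn (val w)) /\
    (forall w (j : nat), Em u (val w) j = Em v (val (f w)) j).

From mathcomp Require Import all_boot all_order all_algebra zify.
Set Implicit Arguments. Unset Strict Implicit. Unset Printing Implicit Defensive.
Import Order.TTheory GRing.Theory Num.Theory.

(** For a word [z], a length [L] and offsets [E], let the envelope of [z] be the
    least positive word of length [L] into which [z] embeds at every offset of
    [E]. Counting by heights, its sum is [L] plus, for every [h >= 2], the number
    of positions covered by the translates by [E] of the layer [{i | z_i >= h}].
    A rigid shift keeps the layers below the cut and translates those above it,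
    so all envelope sums are invariant.

    Envelope sums determine how many words of a given length and sum contain [z]
    at all indices of a given set: these are the words dominating an envelope,
    and their number depends only on the sum of the envelope. Moebius inversion
    over sets of indices then counts the words with each exact embedding
    profile, and matching words of equal profile rank by rank yields the
    bijection of super-strong Wilf equivalence. Conversely, applying such a
    bijection to an envelope shows that it preserves envelope sums.

    For permutations [u], [v] with equal envelope sums, let [w] be obtained from
    [u] by rigid shifts and have the layers of [v] below height [g]. Inclusion-
    exclusion on the envelope sums, probed with the translates that rebuild the
    [g]-th layer of [w], shows that the [g]-th layer of [v] is a translate of
    that of [w]; cutting [w] at height [g - 1] and shifting by that translation
    matches layer [g] as well, and after [n] steps [w = v]. *)

Lemma letter_at_gt0 u x :
  (0 < letter_at u x)%N -> exists2 i : nat, x = i & (i < size u)%N.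
Proof.
case: x => [i|i] //= i_gt0; exists i => //.
by rewrite ltnNge; apply: contraTN i_gt0 => /(nth_default 0) ->.
Qed.

Lemma letter_at_out u x :
  ~~ ((0 <= x)%R && (x < Posz (size u))%R) -> letter_at u x = 0.
Proof.
apply: contraNeq; rewrite -lt0n => /letter_at_gt0 [i -> lt_i].
by rewrite /= ltz_nat lt_i.
Qed.

Lemma letter_at_leq_sumn u x : (letter_at u x <= sumn u)%N.
Proof.
case: x => [i|i] //=; elim: u i => [|a u IH] [|i] //=; first exact: leq_addr.
exact: leq_trans (IH i) (leq_addl _ _).
Qed.

Lemma count_layer u h :
  count (fun a => h <= a)%N u =
  count (fun i : nat => h <= letter_at u i)%N (iota 0 (size u)).
Proof. by rewrite -[u in LHS](mkseq_nth 0) /mkseq count_map. Qed.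

Lemma layer_in_range u h x : (0 < h)%N -> (h <= letter_at u x)%N ->
  (0 <= x)%R /\ (x < Posz (size u))%R.
Proof.
move=> h_gt0 /(leq_trans h_gt0) /letter_at_gt0 [i -> lt_i].
by rewrite ltz_nat.
Qed.

Lemma count_split (T : Type) (a b : pred T) s :
  count (fun x => a x && b x) s + count (fun x => a x && ~~ b x) s = count a s.
Proof. by elim: s => //= x s <-; case: (a x); case: (b x) => /=; lia. Qed.

Definition count_range L (R : int -> bool) :=
  count (fun i : nat => R i) (iota 0 L).

Lemma count_translate_leq L (P Q : int -> bool) (t : int) :
  (forall x, Q x -> (0 <= x)%R /\ (x < Posz L)%R) ->
  (forall x, P x -> Q (x + t)%R) ->
  (count_range L P <= count_range L Q)%N.
Proof.
move=> Q_range PQ; rewrite /count_range -!size_filter.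
rewrite -(size_map (fun i : nat => i%:Z + t)%R).
rewrite -(size_map Posz [seq i <- iota 0 L | Q (Posz i)]).
apply: uniq_leq_size.
  by rewrite map_inj_uniq ?filter_uniq ?iota_uniq // => a b /addIr [].
move=> y /mapP [i]; rewrite mem_filter mem_iota => /andP[Pi _] ->.
have Qit := PQ _ Pi; have [] := Q_range _ Qit.
case: (i%:Z + t)%R Qit => [k|k] //= Qk _ lt_k.
by apply/mapP; exists k; rewrite // mem_filter mem_iota Qk /=; lia.
Qed.

Lemma count_translate L (P Q : int -> bool) (t : int) :
  (forall x, P x -> (0 <= x)%R /\ (x < Posz L)%R) ->
  (forall x, Q x -> (0 <= x)%R /\ (x < Posz L)%R) ->
  (forall x, Q x = P (x - t)%R) ->
  count_range L P = count_range L Q.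
Proof.
move=> P_range Q_range QP; apply/eqP; rewrite eqn_leq.
rewrite (count_translate_leq (t := t)) => [|//|x Px]; last by rewrite QP addrK.
by rewrite (count_translate_leq (t := (- t)%R)) // => x; rewrite QP.
Qed.

Lemma translate_of_count_leq L (P Q : int -> bool) (t : int) :
  (forall x, Q x -> (0 <= x)%R /\ (x < Posz L)%R) ->
  (forall x, P x -> Q (x + t)%R) ->
  (count_range L Q <= count_range L P)%N ->
  forall y, Q y = P (y - t)%R.
Proof.
move=> Q_range PQ QP y; apply/idP/idP; last by move/PQ; rewrite subrK.
move=> Qy; apply/negPn/negP => nPy.
(* Otherwise the translate of [P] would fit into [Q] minus [y]. *)
have [y_ge0 y_lt] := Q_range _ Qy.
case: y y_ge0 y_lt Qy nPy => [k|//] _ /[!ltz_nat] k_lt Qk nPk.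
pose Q' x := Q x && (x != Posz k).
have PQ' : (count_range L P <= count_range L Q')%N.
  apply: (count_translate_leq (t := t)) => [x /andP[/Q_range] //|x Px].
  by rewrite /Q' PQ //; apply: contraNneq nPk => <-; rewrite addrK.
have QQ' : count_range L Q = (count_range L Q').+1.
  rewrite /count_range -(count_split (fun i : nat => Q i) (fun i : nat => i == k)).
  rewrite addnC -addn1; congr (_ + _).
  rewrite (eq_count (a2 := pred1 k)) ?count_uniq_mem ?iota_uniq ?mem_iota ?k_lt //.
  by move=> i /=; case: (i =P k) => [->|_]; rewrite ?Qk ?andbF.
lia.
Qed.

(** * Rigid shifts *)

Section RigidShift.

Variables (u : seq nat) (h0 : nat) (t : int).
Hypothesis ok : rigid_shift_ok u h0 t.

Lemma size_rigid_shift : size (rigid_shift u h0 t) = size u.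
Proof. by rewrite size_mkseq. Qed.

Lemma rigid_shift_ok_at y : (h0 < letter_at u y)%N ->
  ((0 <= y + t)%R /\ (y + t < Posz (size u))%R) /\ (h0 <= letter_at u (y + t))%N.
Proof.
move=> h0_y; have [i y_i lt_i] := letter_at_gt0 (leq_trans (ltn0Sn h0) h0_y).
by subst y; exact: ok lt_i h0_y.
Qed.

Lemma letter_at_rigid_shift (j : nat) : (j < size u)%N ->
  letter_at (rigid_shift u h0 t) j =
  minn (nth 0 u j) h0 + (letter_at u (j%:Z - t)%R - h0).
Proof. by move=> lt_j; rewrite /= nth_mkseq. Qed.

Lemma letter_at_rigid_shift_leq x :
  (letter_at (rigid_shift u h0 t) x <= h0 + sumn u)%N.
Proof.
have [|/negPf out] := boolP ((0 <= x)%R && (x < Posz (size u))%R).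
  case: x => [j|//] /andP[_]; rewrite ltz_nat => lt_j.
  rewrite letter_at_rigid_shift //; have := letter_at_leq_sumn u (j%:Z - t)%R; lia.
by rewrite letter_at_out ?size_rigid_shift ?out.
Qed.

Lemma rigid_shift_layer h x : (0 < h)%N ->
  (h <= letter_at (rigid_shift u h0 t) x)%N =
  if (h <= h0)%N then (h <= letter_at u x)%N else (h <= letter_at u (x - t)%R)%N.
Proof.
move=> h_gt0.
have [|out] := boolP ((0 <= x)%R && (x < Posz (size u))%R); last first.
  rewrite (letter_at_out (u := rigid_shift _ _ _)) ?size_rigid_shift //.
  rewrite letter_at_out // leqn0 (gtn_eqF h_gt0); case: ifP => le_h //.
  apply/esym/negbTE; apply: contra out => hle.
  have h0h : (h0 < h)%N by rewrite ltnNge le_h.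
  have [[lo hi] _] := rigid_shift_ok_at (y := (x - t)%R) (leq_trans h0h hle).
  by move: lo hi; rewrite subrK => -> ->.
case: x => [j|//] /andP[_]; rewrite ltz_nat => lt_j.
rewrite letter_at_rigid_shift //.
set a := nth 0 u j; set b := letter_at u (j%:Z - t)%R.
change (letter_at u j) with a.
have [b_le|b_gt] := leqP b h0.
  have -> : b - h0 = 0 by lia.
  by case: ifP => le_h; apply/idP/idP; lia.
have [_ a_ge] := rigid_shift_ok_at b_gt; rewrite subrK /= -/a in a_ge.
by case: ifP => le_h; apply/idP/idP; lia.
Qed.

Lemma count_layer_rigid_shift h :
  count (fun a => h <= a)%N (rigid_shift u h0 t) = count (fun a => h <= a)%N u.
Proof.
case: h => [|h]; first by rewrite !(eq_count (a2 := predT)) // !count_predT size_rigid_shift.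
rewrite !count_layer size_rigid_shift.
have [le_h|lt_h] := leqP h.+1 h0.
  by apply: eq_count => i; rewrite rigid_shift_layer // le_h.
symmetry; apply: (@count_translate _ (fun x => h.+1 <= letter_at u x)%N
  (fun x => h.+1 <= letter_at (rigid_shift u h0 t) x)%N t) => x.
- exact: layer_in_range.
- by rewrite -(size_rigid_shift); exact: layer_in_range.
- by rewrite rigid_shift_layer // leqNgt lt_h.
Qed.

End RigidShift.

(** * Envelopes *)

(* Offset [e] stands for the embedding index [e.+1]; see [Em_envelope]. *)
Definition envelope_at (z E : seq nat) (m : nat) : nat :=
  foldr (fun e acc => maxn (letter_at z (Posz m - Posz e)%R) acc) 1 E.

Definition envelope z E L := mkseq (envelope_at z E) L.

Definition offsets_fit n L (E : seq nat) := all (fun e => e + n <= L)%N E.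

Definition covered z h (E : seq nat) (m : nat) :=
  has (fun e => h <= letter_at z (Posz m - Posz e)%R)%N E.

Definition cover_count z h E L := count (covered z h E) (iota 0 L).

Definition dominates (b x : seq nat) :=
  all (fun m => nth 0 b m <= nth 0 x m)%N (iota 0 (size b)).

Lemma geq_envelope_at z E m N :
  (envelope_at z E m <= N)%N =
  (0 < N)%N && all (fun e => letter_at z (Posz m - Posz e)%R <= N)%N E.
Proof. by elim: E => [|e E IH] /=; rewrite ?andbT // geq_max IH andbCA. Qed.

Lemma envelope_at_gt0 z E m : (0 < envelope_at z E m)%N.
Proof. by elim: E => [|e E IH] //=; rewrite leq_max IH orbT. Qed.

Lemma envelope_pos z E L : all (fun a => 0 < a)%N (envelope z E L).
Proof. by apply/allP => a /mapP [m _ ->]; exact: envelope_at_gt0. Qed.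

Lemma envelope_at_layer z E m h :
  (h.+2 <= envelope_at z E m)%N = covered z h.+2 E m.
Proof. by elim: E => [|e E IH] //=; rewrite leq_max IH. Qed.

Lemma sum_ord_ltn x N : (x <= N)%N -> \sum_(h < N) (h < x)%N = x.
Proof.
elim: N x => [|N IH] x le_xN; first by rewrite big_ord0; lia.
rewrite big_ord_recr /=; have [lt_Nx|le_xN'] := ltnP N x; last by rewrite IH; lia.
have -> : x = N.+1 by lia.
rewrite addn1 -[X in _ = X.+1](IH N) //; congr S.
by apply: eq_bigr => i _; rewrite ltn_ord ltnS ltnW.
Qed.

Lemma envelope_at_decomp z E m N : (forall x, letter_at z x <= N.+1)%N ->
  envelope_at z E m = 1 + \sum_(h < N) covered z h.+2 E m.
Proof.
move=> z_le; under eq_bigr do rewrite -envelope_at_layer.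
have env_gt0 := envelope_at_gt0 z E m.
have env_le : (envelope_at z E m <= N.+1)%N.
  by rewrite geq_envelope_at; apply/allP => e _.
rewrite -[in LHS](prednK env_gt0) -(@sum_ord_ltn (envelope_at z E m).-1 N); last lia.
by rewrite add1n; congr S; apply: eq_bigr => h _; lia.
Qed.

Lemma sumn_envelope z E L N : (forall x, letter_at z x <= N.+1)%N ->
  sumn (envelope z E L) = L + \sum_(h < N) cover_count z h.+2 E L.
Proof.
move=> z_le; rewrite /envelope /mkseq sumnE big_map.
under eq_bigr do rewrite (envelope_at_decomp _ _ z_le).
rewrite big_split /= sum1_size size_iota; congr (_ + _).
rewrite exchange_big /=; apply: eq_bigr => h _.
by rewrite /cover_count -sumn_count sumnE big_map.
Qed.

Lemma letter_at_leq_envelope_at z E m e : e \in E ->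
  (letter_at z (Posz m - Posz e)%R <= envelope_at z E m)%N.
Proof.
by move=> eE; have := leqnn (envelope_at z E m); rewrite {1}geq_envelope_at => /andP[_ /allP]; apply.
Qed.

Lemma Em_envelope z x E L :
  size x = L -> all (fun a => 0 < a)%N x -> offsets_fit (size z) L E ->
  all (fun e => Em z x e.+1) E = dominates (envelope z E L) x.
Proof.
move=> Sx x_pos fit; apply/allP/allP => [Em_x m | dom e eE].
  rewrite size_mkseq mem_iota => /andP[_ lt_mL]; rewrite nth_mkseq //.
  rewrite geq_envelope_at (all_nthP 0 x_pos) ?Sx //=; apply/allP => e eE.
  case z_me: (letter_at z (Posz m - Posz e)%R) => [//|l].
  have [k Ek lt_k] : exists2 k : nat, (Posz m - Posz e)%R = k & (k < size z)%N.
    by apply: letter_at_gt0; rewrite z_me.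
  move: (Em_x e eE) => /and3P[_ _ /allP /(_ k)]; rewrite mem_iota lt_k => /(_ isT).
  by rewrite -z_me Ek /= (_ : e.+1 + k - 1 = m)%N //; lia.
have fit_e : (e + size z <= L)%N := allP fit e eE.
apply/and3P; split; [by []|lia|]; apply/allP => k; rewrite mem_iota => /andP[_ lt_k].
have -> : (e.+1 + k - 1 = e + k)%N by lia.
have := dom (e + k); rewrite size_mkseq mem_iota nth_mkseq; last lia.
move=> /(_ ltac:(lia)); apply: leq_trans.
have := letter_at_leq_envelope_at z (e + k) eE.
by rewrite PoszD addrAC subrr add0r.
Qed.

Definition envelope_equiv n u v := forall L E, offsets_fit n L E ->
  sumn (envelope u E L) = sumn (envelope v E L).

Lemma covered_in_range z h E L x : (0 < h)%N -> offsets_fit (size z) L E ->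
  has (fun e => h <= letter_at z (x - Posz e)%R)%N E -> (0 <= x)%R /\ (x < Posz L)%R.
Proof.
move=> h_gt0 fit /hasP [e eE /(layer_in_range h_gt0) [x_ge x_lt]].
by have := allP fit e eE; split; lia.
Qed.

Lemma cover_count_rigid_shift u h0 t h E L :
  rigid_shift_ok u h0 t -> (0 < h)%N -> offsets_fit (size u) L E ->
  cover_count (rigid_shift u h0 t) h E L = cover_count u h E L.
Proof.
move=> ok h_gt0 fit; have [le_h|lt_h] := leqP h h0.
  by apply: eq_count => m; apply: eq_has => e /=; rewrite rigid_shift_layer // le_h.
symmetry; apply: (@count_translate _
  (fun x => has (fun e => h <= letter_at u (x - Posz e)%R)%N E)
  (fun x => has (fun e => h <= letter_at (rigid_shift u h0 t) (x - Posz e)%R)%N E) t) => x.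
- exact: covered_in_range.
- by apply: covered_in_range; rewrite ?size_rigid_shift.
- by apply: eq_has => e /=; rewrite rigid_shift_layer // leqNgt lt_h /= addrAC.
Qed.

Lemma envelope_equiv_rigid_shift u h0 t :
  rigid_shift_ok u h0 t -> envelope_equiv (size u) u (rigid_shift u h0 t).
Proof.
move=> ok L E fit.
have u_le x : (letter_at u x <= (h0 + sumn u).+1)%N.
  by have := letter_at_leq_sumn u x; lia.
have su_le x : (letter_at (rigid_shift u h0 t) x <= (h0 + sumn u).+1)%N.
  exact: leqW (letter_at_rigid_shift_leq u h0 t x).
rewrite (sumn_envelope _ _ u_le) (sumn_envelope _ _ su_le); congr (_ + _).
by apply: eq_bigr => h _; rewrite cover_count_rigid_shift.
Qed.

(** * Counting words by embedding profile *)

Fixpoint compositions_enum (L s : nat) : seq (seq nat) :=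
  if L is L'.+1 then [seq a :: x | a <- iota 1 s, x <- compositions_enum L' (s - a)]
  else if s == 0 then [:: [::]] else [::].

Definition compositions L s := undup (compositions_enum L s).

Lemma mem_compositions L s x : (x \in compositions L s) =
  [&& size x == L, sumn x == s & all (fun a => 0 < a)%N x].
Proof.
rewrite mem_undup; elim: L s x => [|L IH] s x /=.
  by case: s => [|s]; case: x => [|a x]; rewrite //= ?inE.
apply/allpairsPdep/idP => [[a [y [aI yC ->]]]|].
  move: aI yC; rewrite mem_iota IH /= eqSS => /andP[a_ge a_lt] /and3P[-> /eqP sy ->].
  by rewrite a_ge andbT; apply/eqP; lia.
case: x => [|a y] //= /and3P[Sy /eqP sy /andP[a_gt0 y_pos]].
exists a, y; rewrite mem_iota IH -eqSS Sy y_pos andbT; split=> //; first lia.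
by apply/eqP; lia.
Qed.

Lemma uniq_compositions L s : uniq (compositions L s).
Proof. exact: undup_uniq. Qed.

Lemma sumn_nth (x : seq nat) : sumn x = \sum_(m <- iota 0 (size x)) nth 0 x m.
Proof. by rewrite -[x in LHS](mkseq_nth 0 x) /mkseq sumnE big_map. Qed.

Lemma count_dominates_leq L s b b' :
  size b = L -> size b' = L -> all (fun a => 0 < a)%N b' -> sumn b = sumn b' ->
  (count (dominates b) (compositions L s) <= count (dominates b') (compositions L s))%N.
Proof.
move=> Sb Sb' b'_pos sb.
pose shift x := mkseq (fun m => nth 0 x m - nth 0 b m + nth 0 b' m) L.
have domP x : dominates b x -> forall m, (m < L)%N -> (nth 0 b m <= nth 0 x m)%N.
  by move=> /allP dom m lt_m; apply: dom; rewrite mem_iota Sb.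
rewrite -!size_filter -(size_map shift); apply: uniq_leq_size.
  rewrite map_inj_in_uniq ?filter_uniq ?uniq_compositions // => x y.
  rewrite !mem_filter !mem_compositions.
  move=> /andP[dx /and3P[/eqP Sx _ _]] /andP[dy /and3P[/eqP Sy _ _]] E.
  apply: (@eq_from_nth _ 0) => [|m]; rewrite ?Sx ?Sy // => lt_m.
  have := congr1 (fun z => nth 0 z m) E; rewrite !nth_mkseq //.
  by have := domP x dx m lt_m; have := domP y dy m lt_m; lia.
move=> y /mapP [x]; rewrite mem_filter mem_compositions.
move=> /andP[dx /and3P[/eqP Sx /eqP sx x_pos]] ->.
rewrite mem_filter mem_compositions size_mkseq eqxx /=; apply/and3P; split.
- by apply/allP => m; rewrite mem_iota Sb' => /andP[_ lt_m]; rewrite nth_mkseq //; lia.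
- rewrite -sx; apply/eqP/(@addIn (sumn b)).
  rewrite [in RHS]sb !sumn_nth size_mkseq Sb Sb' Sx -!big_split /=.
  apply: eq_big_seq => m; rewrite mem_iota => /andP[_ lt_m].
  by rewrite nth_mkseq //; have := domP x dx m lt_m; lia.
- apply/allP => a /mapP [m]; rewrite mem_iota => /andP[_ lt_m] ->.
  by have := (all_nthP 0 b'_pos) m; rewrite Sb' => /(_ lt_m); lia.
Qed.

Lemma count_dominates L s b b' :
  size b = L -> size b' = L ->
  all (fun a => 0 < a)%N b -> all (fun a => 0 < a)%N b' -> sumn b = sumn b' ->
  count (dominates b) (compositions L s) = count (dominates b') (compositions L s).
Proof.
by move=> *; apply/eqP; rewrite eqn_leq !count_dominates_leq.
Qed.

Lemma count_subset_partition (T : eqType) (K : nat) (W : seq T)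
    (F : T -> {set 'I_K}) (A : {set 'I_K}) :
  count (fun x => A \subset F x) W =
  \sum_(B : {set 'I_K} | A \subset B) count (fun x => F x == B) W.
Proof.
rewrite -sumn_count sumnE big_map.
under [in RHS]eq_bigr => B _ do rewrite -sumn_count sumnE big_map.
rewrite (exchange_big_dep xpredT) //=; apply: eq_bigr => x _.
case: (boolP (A \subset F x)) => AF; last first.
  rewrite big1 // => B; rewrite andbT => AB.
  by case: (F x =P B) => // FB; rewrite FB AB in AF.
rewrite (bigD1 (F x)) ?AF //= eqxx big1 // => B /andP[_].
by rewrite eq_sym => /negbTE ->.
Qed.

(* Moebius inversion over the subsets of ['I_K]. *)
Lemma count_eq_of_count_superset_eq (T : eqType) (K : nat) (W : seq T)
    (F G : T -> {set 'I_K}) :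
  (forall A : {set 'I_K}, count (fun x => A \subset F x) W = count (fun x => A \subset G x) W) ->
  forall A, count (fun x => F x == A) W = count (fun x => G x == A) W.
Proof.
move=> FG; suff: forall d (A : {set 'I_K}), (K - #|A| < d)%N ->
    count (fun x => F x == A) W = count (fun x => G x == A) W.
  by move=> + A; apply.
elim=> [//|d IH] A lt_d; have := FG A; rewrite !count_subset_partition.
rewrite !(bigD1 A (P := fun B : {set 'I_K} => A \subset B)) //=.
rewrite (eq_bigr (fun B => count (fun x => G x == B) W)) => [/addIn //|B /andP[AB BA]].
apply: IH; have /proper_card : A \proper B by rewrite properEneq eq_sym BA.
by have := max_card B; rewrite card_ord; lia.
Qed.

Definition emb_set L z x : {set 'I_L.+1} := [set j : 'I_L.+1 | Em z x j].

Definition emb_profile z x := [seq Em z x j | j <- iota 0 (size x).+1].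

Lemma size_emb_profile z x : size (emb_profile z x) = (size x).+1.
Proof. by rewrite size_map size_iota. Qed.

Lemma Em_profile z x j : (0 < size z)%N ->
  Em z x j = if (j <= size x)%N then nth false (emb_profile z x) j else false.
Proof.
move=> z_gt0; case: ifP => le_j; first by rewrite (nth_map 0) ?nth_iota ?size_iota.
by apply/negbTE/negP => /and3P[_ + _]; lia.
Qed.

Lemma emb_profile_eq_set L z x (Q : seq bool) : size x = L -> size Q = L.+1 ->
  (emb_profile z x == Q) = (emb_set L z x == [set j : 'I_L.+1 | nth false Q j]).
Proof.
move=> Sx SQ; apply/eqP/eqP => [<- | EQ].
  by apply/setP => j; rewrite !inE (nth_map 0) ?nth_iota ?size_iota ?Sx.
apply: (@eq_from_nth _ false) => [|i]; rewrite size_emb_profile Sx // => lt_i.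
have /setP /(_ (Ordinal lt_i)) := EQ; rewrite !inE /= => <-.
by rewrite (nth_map 0) ?nth_iota ?size_iota ?Sx.
Qed.

Lemma subset_emb_set_offsets L z x (A : {set 'I_L.+1}) : (forall j, j \in A -> 0 < j)%N ->
  (A \subset emb_set L z x) = all (fun e => Em z x e.+1) [seq (nat_of_ord j).-1 | j <- enum A].
Proof.
move=> A_gt0; apply/subsetP/allP => [AE _ /mapP [j jA ->] | EA j jA].
  by rewrite mem_enum in jA; have := AE j jA; rewrite inE prednK ?A_gt0.
rewrite inE -(prednK (A_gt0 j jA)); apply: EA.
by apply/mapP; exists j; rewrite ?mem_enum.
Qed.

Lemma count_subset_emb_set n u v L s (A : {set 'I_L.+1}) :
  size u = n -> size v = n -> envelope_equiv n u v ->
  count (fun x => A \subset emb_set L u x) (compositions L s) =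
  count (fun x => A \subset emb_set L v x) (compositions L s).
Proof.
move=> Su Sv uv.
have [A_in|] := boolP [forall j in A, (0 < j) && (j + n - 1 <= L)]%N; last first.
  case/forall_inPn => j jA j_out.
  have no_emb z : size z = n -> {in compositions L s, forall x, (A \subset emb_set L z x) = false}.
    move=> Sz x; rewrite mem_compositions => /and3P[/eqP Sx _ _].
    apply/negbTE/negP => /subsetP /(_ j jA); rewrite inE /Em Sx Sz => /and3P[j_gt0 j_le _].
    by rewrite j_gt0 j_le in j_out.
  by rewrite (eq_in_count (no_emb u Su)) (eq_in_count (no_emb v Sv)).
have A_gt0 j : j \in A -> (0 < j)%N by move/(forall_inP A_in)/andP => [].
set E := [seq (nat_of_ord j).-1 | j <- enum A].
have fit : offsets_fit n L E.
  apply/allP => e /mapP [j]; rewrite mem_enum => jA ->.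
  by have := forall_inP A_in j jA; lia.
have dom z : size z = n ->
    {in compositions L s, forall x, (A \subset emb_set L z x) = dominates (envelope z E L) x}.
  move=> Sz x; rewrite mem_compositions => /and3P[/eqP Sx _ x_pos].
  by rewrite subset_emb_set_offsets // (Em_envelope Sx) // Sz.
rewrite (eq_in_count (dom u Su)) (eq_in_count (dom v Sv)).
by apply: count_dominates; rewrite ?size_mkseq ?envelope_pos ?uv.
Qed.

Definition profile_equiv u v := forall L s (Q : seq bool),
  count (fun x => emb_profile u x == Q) (compositions L s) =
  count (fun x => emb_profile v x == Q) (compositions L s).

Lemma profile_equiv_sym u v : profile_equiv u v -> profile_equiv v u.
Proof. by move=> uv L s Q; rewrite uv. Qed.

Lemma profile_equiv_of_envelope_equiv n u v :
  size u = n -> size v = n -> envelope_equiv n u v -> profile_equiv u v.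
Proof.
move=> Su Sv uv L s Q; have [SQ|SQ] := eqVneq (size Q) L.+1; last first.
  have no_profile z : {in compositions L s, forall x, (emb_profile z x == Q) = false}.
    move=> x; rewrite mem_compositions => /and3P[/eqP Sx _ _].
    by apply: contraNF SQ => /eqP <-; rewrite size_emb_profile Sx.
  by rewrite (eq_in_count (no_profile u)) (eq_in_count (no_profile v)).
have as_set z : {in compositions L s, forall x,
    (emb_profile z x == Q) = (emb_set L z x == [set j : 'I_L.+1 | nth false Q j])}.
  by move=> x; rewrite mem_compositions => /and3P[/eqP Sx _ _]; exact: emb_profile_eq_set.
rewrite (eq_in_count (as_set u)) (eq_in_count (as_set v)).
by apply: count_eq_of_count_superset_eq => A; exact: count_subset_emb_set Su Sv uv.
Qed.

Definition profile_class w L s Q := [seq y <- compositions L s | emb_profile w y == Q].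

Definition profile_transfer u v x :=
  let class w := profile_class w (size x) (sumn x) (emb_profile u x) in
  nth x (class v) (index x (class u)).

Section ProfileTransfer.

Variables u v : seq nat.
Hypothesis uv : profile_equiv u v.

Lemma mem_profile_class w x : all (fun a => 0 < a)%N x ->
  x \in profile_class w (size x) (sumn x) (emb_profile w x).
Proof. by move=> x_pos; rewrite mem_filter eqxx mem_compositions !eqxx. Qed.

Lemma index_profile_class x : all (fun a => 0 < a)%N x ->
  (index x (profile_class u (size x) (sumn x) (emb_profile u x)) <
   size (profile_class v (size x) (sumn x) (emb_profile u x)))%N.
Proof.
move=> x_pos; rewrite /profile_class size_filter -uv -size_filter index_mem.
exact: mem_profile_class.
Qed.

Lemma profile_transfer_spec x : all (fun a => 0 < a)%N x ->
  profile_transfer u v x \in profile_class v (size x) (sumn x) (emb_profile u x).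
Proof. by move=> x_pos; apply/mem_nth/index_profile_class. Qed.

Lemma profile_transfer_compositions x : all (fun a => 0 < a)%N x ->
  profile_transfer u v x \in compositions (size x) (sumn x).
Proof. by move/profile_transfer_spec; rewrite mem_filter => /andP[]. Qed.

Lemma emb_profile_transfer x : all (fun a => 0 < a)%N x ->
  emb_profile v (profile_transfer u v x) = emb_profile u x.
Proof. by move/profile_transfer_spec; rewrite mem_filter => /andP[/eqP]. Qed.

Lemma profile_transferK x : all (fun a => 0 < a)%N x ->
  profile_transfer v u (profile_transfer u v x) = x.
Proof.
move=> x_pos; have := profile_transfer_compositions x_pos.
rewrite mem_compositions => /and3P[/eqP Sy /eqP sy _].
rewrite [profile_transfer v u _]/profile_transfer emb_profile_transfer // Sy sy.
rewrite index_uniq ?index_profile_class ?filter_uniq ?uniq_compositions //.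
by rewrite nth_index ?mem_profile_class.
Qed.

End ProfileTransfer.

Lemma ss_wilf_of_profile_equiv u v : (0 < size u)%N -> (0 < size v)%N ->
  profile_equiv u v -> ss_wilf_equiv u v.
Proof.
move=> u_gt0 v_gt0 uv; have vu := profile_equiv_sym uv.
have transfer_pos a b (w : pword) : profile_equiv a b ->
    all (fun c => 0 < c)%N (profile_transfer a b (val w)).
  by move=> ab; have := profile_transfer_compositions ab (valP w); rewrite mem_compositions => /and3P[].
pose f (w : pword) : pword := insubd w (profile_transfer u v (val w)).
pose g (w : pword) : pword := insubd w (profile_transfer v u (val w)).
have val_f w : val (f w) = profile_transfer u v (val w).
  by rewrite /f insubdK //; apply: transfer_pos.
have val_g w : val (g w) = profile_transfer v u (val w).
  by rewrite /g insubdK //; apply: transfer_pos.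
have f_comp w : val (f w) \in compositions (size (val w)) (sumn (val w)).
  by rewrite val_f; apply/profile_transfer_compositions/valP.
have S_f w : size (val (f w)) = size (val w).
  by move: (f_comp w); rewrite mem_compositions => /and3P[/eqP].
exists f; split; [|split; [exact: S_f|split]].
- exists g => w; apply: val_inj.
  + by rewrite val_g val_f profile_transferK //; exact: valP.
  + by rewrite val_f val_g profile_transferK //; exact: valP.
- by move=> w; move: (f_comp w); rewrite mem_compositions => /and3P[_ /eqP].
- move=> w j; rewrite !Em_profile // S_f val_f emb_profile_transfer //; exact: valP.
Qed.

Lemma ss_wilf_equiv_trans u w v :
  ss_wilf_equiv u w -> ss_wilf_equiv w v -> ss_wilf_equiv u v.
Proof.
move=> [f [f_bij [S_f [s_f Em_f]]]] [g [g_bij [S_g [s_g Em_g]]]].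
exists (g \o f); split; first exact: bij_comp.
by split; [|split] => /= x; rewrite ?S_g ?s_g // => j; rewrite Em_f Em_g.
Qed.

Lemma ss_wilf_of_sse u v : (0 < size u)%N -> strongly_shift_equiv u v -> ss_wilf_equiv u v.
Proof.
move=> + uv; elim: uv => [w w_gt0|w w' v' [h [t [ok ->]]] _ IH w_gt0].
  by apply: ss_wilf_of_profile_equiv.
have Sw' := size_rigid_shift w h t.
apply: ss_wilf_equiv_trans (IH _); last by rewrite Sw'.
apply: ss_wilf_of_profile_equiv; rewrite ?Sw' //.
exact: profile_equiv_of_envelope_equiv Sw' (envelope_equiv_rigid_shift ok).
Qed.

(** * Super-strong Wilf equivalence preserves envelopes *)

Lemma leq_sumn_dominates (b x : seq nat) :
  size b = size x -> dominates b x -> (sumn b <= sumn x)%N.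
Proof.
move=> Sbx /allP dom; rewrite !sumn_nth -Sbx !big_seq.
by apply: leq_sum => m; apply: dom.
Qed.

Lemma sumn_envelope_leq_of_Em n a b (f : pword -> pword) :
  size a = n -> size b = n ->
  (forall w, size (val (f w)) = size (val w)) -> (forall w, sumn (val (f w)) = sumn (val w)) ->
  (forall w j, Em a (val w) j = Em b (val (f w)) j) ->
  forall L E, offsets_fit n L E -> (sumn (envelope b E L) <= sumn (envelope a E L))%N.
Proof.
move=> Sa Sb S_f s_f Em_f L E fit.
pose w : pword := exist _ (envelope a E L) (envelope_pos a E L).
have Sw : size (val w) = L by rewrite size_mkseq.
have Em_w : all (fun e => Em a (val w) e.+1) E.
  by rewrite (Em_envelope Sw (valP w)) ?Sa //; apply/allP => m _.
have Sfw : size (val (f w)) = L by rewrite S_f.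
have fit_b : offsets_fit (size b) L E by rewrite Sb.
have dom_fw := Em_envelope Sfw (valP (f w)) fit_b.
rewrite -[sumn (envelope a E L)]/(sumn (val w)) -s_f leq_sumn_dominates //.
  by rewrite size_mkseq S_f.
rewrite -dom_fw; apply/allP => e eE.
by rewrite -Em_f; exact: (allP Em_w).
Qed.

Lemma envelope_equiv_of_ss_wilf n u v :
  size u = n -> size v = n -> ss_wilf_equiv u v -> envelope_equiv n u v.
Proof.
move=> Su Sv [f [[g fK gK] [S_f [s_f Em_f]]]] L E fit.
apply/eqP; rewrite eqn_leq (sumn_envelope_leq_of_Em Su Sv S_f s_f Em_f fit) andbT.
apply: (sumn_envelope_leq_of_Em Sv Su (f := g)) fit => w.
- by rewrite -[in RHS](gK w) S_f.
- by rewrite -[in RHS](gK w) s_f.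
- by move=> j; rewrite Em_f gK.
Qed.

(** * Reconstruction of a permutation from its envelopes *)

Definition covered_all z h (F : seq nat) (m : nat) :=
  all (fun f => h <= letter_at z (Posz m - Posz f))%N F.

Definition pattern_count z h F K L :=
  count (fun m => covered_all z h F m && ~~ covered z h K m) (iota 0 L).

Lemma pattern_count_nil z h K L : pattern_count z h [::] K L + cover_count z h K L = L.
Proof.
by rewrite addnC -[RHS](size_iota 0 L) -(count_predC (covered z h K)).
Qed.

Lemma pattern_count_cons z h e F K L :
  pattern_count z h (e :: F) K L + pattern_count z h F (e :: K) L = pattern_count z h F K L.
Proof.
rewrite /pattern_count -(count_split (fun m => covered_all z h F m && ~~ covered z h K m)
  (fun m : nat => h <= letter_at z (Posz m - Posz e))%N).
by congr (_ + _); apply: eq_count => m /=; case: (h <= _)%N; rewrite /= ?andbT ?andbF.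
Qed.

Definition pattern_weight z N F K L := \sum_(h < N) pattern_count z h.+2 F K L.

Lemma pattern_weight_eq n u v N L :
  (forall x, letter_at u x <= N.+1)%N -> (forall x, letter_at v x <= N.+1)%N ->
  envelope_equiv n u v -> forall F K, offsets_fit n L F -> offsets_fit n L K ->
  pattern_weight u N F K L = pattern_weight v N F K L.
Proof.
move=> u_le v_le uv; elim=> [|e F IH] K fit_F fit_K.
  apply: (@addIn (\sum_(h < N) cover_count u h.+2 K L)).
  have := uv L K fit_K; rewrite (sumn_envelope _ _ u_le) (sumn_envelope _ _ v_le).
  move=> /addnI cover_uv; rewrite [in RHS]cover_uv.
  rewrite /pattern_weight -!big_split /=.
  by apply: eq_bigr => h _; rewrite !pattern_count_nil.
move: fit_F => /= /andP[fit_e fit_F].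
have fit_eK : offsets_fit n L (e :: K) by rewrite /= fit_e.
apply: (@addIn (pattern_weight u N F (e :: K) L)); rewrite [in RHS]IH //.
rewrite /pattern_weight -!big_split /=.
under eq_bigr do rewrite pattern_count_cons.
have := IH K fit_F fit_K; rewrite /pattern_weight => ->.
by apply: eq_bigr => h _; rewrite pattern_count_cons.
Qed.

Lemma size_perm_word n u : is_perm_word n u -> size u = n.
Proof. by move/perm_size ->; rewrite size_iota. Qed.

Lemma count_geq_perm_word n u h : is_perm_word n u -> (0 < h)%N ->
  count (fun a => h <= a)%N u = n.+1 - h.
Proof.
move=> /permP -> h_gt0; elim: n => [|n IH]; first by rewrite /=; lia.
by rewrite -[n.+1]addn1 iotaD count_cat IH /= add1n; case: (leqP h (n + 1)); lia.
Qed.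

Lemma perm_word_pos n u : is_perm_word n u -> all (fun a => 0 < a)%N u.
Proof.
by move=> u_perm; rewrite all_count (count_geq_perm_word u_perm) // (size_perm_word u_perm) subSS subn0.
Qed.

Lemma letter_at_leq_of_count0 z k :
  count (fun a => k.+1 <= a)%N z = 0 -> forall x, (letter_at z x <= k)%N.
Proof.
move=> /eqP; rewrite -leqn0 leqNgt -has_count => /hasPn z_le x.
rewrite leqNgt; apply/negP => lt_k.
have [i Ex lt_i] := letter_at_gt0 (leq_ltn_trans (leq0n k) lt_k).
by have := z_le _ (mem_nth 0 lt_i); rewrite -[nth 0 z i]/(letter_at z i) -Ex lt_k.
Qed.

Lemma layer1_letter_at z x : all (fun a => 0 < a)%N z ->
  (1 <= letter_at z x)%N = (0 <= x)%R && (x < Posz (size z))%R.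
Proof.
move=> z_pos; apply/idP/idP => [/letter_at_gt0 [i -> lt_i] | ].
  by rewrite /= ltz_nat lt_i.
by case: x => [i|//] /andP[_]; rewrite ltz_nat => /(all_nthP 0 z_pos).
Qed.

Lemma eq_big_ord_at (a b : nat -> nat) N i : (i < N)%N ->
  (forall j, (j < N)%N -> j != i -> a j = b j) ->
  \sum_(j < N) a j = \sum_(j < N) b j -> a i = b i.
Proof.
move=> lt_i ab; rewrite (bigD1 (Ordinal lt_i)) // [in RHS](bigD1 (Ordinal lt_i)) //=.
rewrite (eq_bigr (fun j : 'I_N => b j)) => [/addIn //|j ji].
exact: ab (ltn_ord j) ji.
Qed.

(* [m] lies in the translates of the [h]-th layer of [z] by all probe offsets iff
   the [g]-th layer of [w], translated by [m - n], lies in the [h]-th layer of [z];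
   the offsets are shifted by [n] to stay nonnegative. *)
Definition probe_offsets (w : seq nat) (g n : nat) : seq nat :=
  [seq n - a | a <- iota 0 n & (g <= nth 0 w a)%N].

Lemma probe_offsets_fit w g n : offsets_fit n (n + n) (probe_offsets w g n).
Proof. by apply/allP => f /mapP [a _ ->]; rewrite leq_add2r leq_subr. Qed.

Lemma covered_all_probe z h w g n m : (0 < g)%N -> size w = n ->
  covered_all z h (probe_offsets w g n) m ->
  forall x, (g <= letter_at w x)%N -> (h <= letter_at z (x + (Posz m - Posz n)))%N.
Proof.
move=> g_gt0 Sw /allP cov x w_x.
have [a Ex lt_a] := letter_at_gt0 (leq_trans g_gt0 w_x); subst x.
have : (n - a)%N \in probe_offsets w g n.
  by apply/mapP; exists a => //; rewrite mem_filter mem_iota leq0n add0n -Sw lt_a !andbT.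
move/cov; rewrite (_ : Posz m - Posz (n - a) = Posz a + (Posz m - Posz n))%R //.
by rewrite Sw in lt_a; lia.
Qed.

Lemma pattern_count_probe_gt0 w g n : (0 < n)%N ->
  (0 < pattern_count w g (probe_offsets w g n) [::] (n + n))%N.
Proof.
move=> n_gt0; rewrite -has_count; apply/hasP; exists n; first by rewrite mem_iota; lia.
rewrite /= andbT; apply/allP => f /mapP [a]; rewrite mem_filter mem_iota => /andP[w_a lt_a] ->.
by rewrite (_ : Posz n - Posz (n - a) = Posz a)%R //; lia.
Qed.

Lemma pattern_count_probe_eq0 z h w g n : (0 < g)%N -> (0 < h)%N ->
  size w = n -> size z = n ->
  (count (fun a => h <= a)%N z < count (fun a => g <= a)%N w)%N ->
  pattern_count z h (probe_offsets w g n) [::] (n + n) = 0.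
Proof.
move=> g_gt0 h_gt0 Sw Sz lt_hg; apply/eqP; rewrite -leqn0 leqNgt -has_count.
apply/negP => /hasP [m _]; rewrite /= andbT => cov.
suff : (count (fun a => g <= a)%N w <= count (fun a => h <= a)%N z)%N by lia.
rewrite !count_layer Sw Sz.
apply: (@count_translate_leq n (fun x => g <= letter_at w x)%N (fun x => h <= letter_at z x)%N
  (Posz m - Posz n)%R) => x.
- by rewrite -Sz; exact: layer_in_range.
- exact: covered_all_probe cov x.
Qed.

Definition layers_below g w v := forall h, (0 < h)%N -> (h < g)%N ->
  forall x, (h <= letter_at w x)%N = (h <= letter_at v x)%N.

Lemma eq_of_layers_below N w v : size w = size v ->
  (forall x, letter_at w x <= N)%N -> (forall x, letter_at v x <= N)%N ->
  layers_below N.+1 w v -> w = v.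
Proof.
move=> Swv w_le v_le below; apply: (@eq_from_nth _ 0) => // i _.
have := w_le i; have := v_le i; rewrite /= => v_i w_i.
case: (ltngtP (nth 0 w i) (nth 0 v i)) => [lt_wv|lt_vw|//].
  by have := below (nth 0 v i) ltac:(lia) ltac:(lia) i; rewrite /= leqnn leqNgt lt_wv.
by have := below (nth 0 w i) ltac:(lia) ltac:(lia) i; rewrite /= leqnn leqNgt lt_vw.
Qed.

Section NextLayer.

Variables (w v : seq nat) (g : nat) (t : int).
Hypotheses (Swv : size w = size v) (g_ge2 : (2 <= g)%N) (below : layers_below g w v).
Hypothesis top : forall x, (g <= letter_at v x)%N = (g <= letter_at w (x - t)%R)%N.

Lemma rigid_shift_ok_next_layer : rigid_shift_ok w g.-1 t.
Proof.
move=> i lt_i w_i.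
have v_it : (g <= letter_at v (Posz i + t))%N by rewrite top addrK /=; lia.
split; first by rewrite Swv; apply: layer_in_range v_it; lia.
by rewrite below; lia.
Qed.

Lemma layers_below_next_layer : layers_below g.+1 (rigid_shift w g.-1 t) v.
Proof.
move=> h h_gt0 lt_h x; rewrite rigid_shift_layer //; last exact: rigid_shift_ok_next_layer.
case: ifP => le_h; first by apply: below; lia.
have -> : h = g by lia.
by rewrite top.
Qed.

End NextLayer.

Lemma sse_snoc u w w' :
  strongly_shift_equiv u w -> is_rigid_shift w w' -> strongly_shift_equiv u w'.
Proof.
elim=> [z|z y x zy _ IH] ww'; first exact: sse_step ww' (sse_refl _).
exact: sse_step zy (IH ww').
Qed.

Section Reconstruction.

Variables (n : nat) (u v : seq nat).
Hypotheses (n_gt0 : (0 < n)%N) (u_perm : is_perm_word n u) (v_perm : is_perm_word n v).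

Let Sv : size v = n := size_perm_word v_perm.

Let layer_sizes_of_u w := forall h, count (fun a => h <= a)%N w = count (fun a => h <= a)%N u.

Lemma count_geq_layer_sizes w h : layer_sizes_of_u w -> (0 < h)%N ->
  count (fun a => h <= a)%N w = n.+1 - h.
Proof. by move=> w_u h_gt0; rewrite w_u (count_geq_perm_word u_perm). Qed.

Lemma letter_at_leq_layer_sizes w : layer_sizes_of_u w -> forall x, (letter_at w x <= n)%N.
Proof. by move=> w_u; apply: letter_at_leq_of_count0; rewrite (count_geq_layer_sizes w_u) ?subnn. Qed.

Lemma letter_at_perm_word_leq x : (letter_at v x <= n)%N.
Proof. by apply: letter_at_leq_of_count0; rewrite (count_geq_perm_word v_perm) ?subnn. Qed.

Section TopLayer.

Variables (w : seq nat) (g : nat).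
Hypotheses (g_ge2 : (2 <= g)%N) (g_le : (g <= n)%N) (Sw : size w = n).
Hypotheses (w_u : layer_sizes_of_u w) (wv : envelope_equiv n w v) (below : layers_below g w v).

Let probe := probe_offsets w g n.

Lemma pattern_count_top_layer :
  pattern_count w g probe [::] (n + n) = pattern_count v g probe [::] (n + n).
Proof.
have w_le x := leqW (letter_at_leq_layer_sizes w_u x).
have v_le x := leqW (letter_at_perm_word_leq x).
have weight_eq := pattern_weight_eq w_le v_le wv (probe_offsets_fit w g n)
  (isT : offsets_fit n (n + n) [::]).
(* Heights below [g] agree and heights above [g] contribute nothing. *)
rewrite (_ : g = (g - 2).+2); last lia.
apply: (@eq_big_ord_at (fun j => pattern_count w j.+2 probe [::] (n + n))
  (fun j => pattern_count v j.+2 probe [::] (n + n)) n (g - 2)); [lia| |exact: weight_eq].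
move=> j lt_j /eqP ne_j; have [lt_jg|lt_gj] := ltnP j.+2 g.
  by apply: eq_count => m /=; rewrite !andbT; apply: eq_all => f; rewrite below.
have gt_jg : (g < j.+2)%N by lia.
rewrite !(@pattern_count_probe_eq0 _ j.+2 w g n) ?Sv //; first lia.
all: rewrite ?(count_geq_layer_sizes w_u) ?(count_geq_perm_word v_perm) //; lia.
Qed.

Lemma top_layer_translate :
  exists t, forall x, (g <= letter_at v x)%N = (g <= letter_at w (x - t)%R)%N.
Proof.
have := pattern_count_probe_gt0 w g n_gt0.
rewrite pattern_count_top_layer -has_count => /hasP [m _]; rewrite /= andbT => cov.
exists (Posz m - Posz n)%R.
apply: (@translate_of_count_leq n (fun x => g <= letter_at w x)%N
  (fun x => g <= letter_at v x)%N).
- by move=> x; rewrite -Sv; apply: layer_in_range; lia.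
- by apply: covered_all_probe cov; first lia.
have count_v := count_layer v g; have count_w := count_layer w g.
rewrite Sv in count_v; rewrite Sw in count_w; rewrite /count_range -count_v -count_w.
by rewrite (count_geq_layer_sizes w_u) ?(count_geq_perm_word v_perm) //; lia.
Qed.

End TopLayer.

Lemma sse_of_layers_below d g w : g + d = n.+1 -> (2 <= g)%N ->
  strongly_shift_equiv u w -> size w = n -> layer_sizes_of_u w ->
  envelope_equiv n w v -> layers_below g w v -> strongly_shift_equiv u v.
Proof.
elim: d g w => [|d IH] g w gd g_ge2 uw Sw w_u wv below.
  suff <- : w = v by [].
  have g_n : g = n.+1 by rewrite -gd addn0.
  apply: (@eq_of_layers_below n); rewrite ?Sv -?g_n //.
  - exact: letter_at_leq_layer_sizes.
  - exact: letter_at_perm_word_leq.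
have g_le : (g <= n)%N by lia.
have [t top] := top_layer_translate g_ge2 g_le Sw w_u wv below.
have Swv : size w = size v by rewrite Sw Sv.
have ok := rigid_shift_ok_next_layer Swv g_ge2 below top.
apply: (IH g.+1 (rigid_shift w g.-1 t)) => //; [lia|lia| | | | | ].
- by apply: sse_snoc uw _; exists g.-1, t.
- by rewrite size_rigid_shift.
- by move=> h; rewrite count_layer_rigid_shift.
- by move=> L E fit; rewrite -(envelope_equiv_rigid_shift ok) ?Sw //; exact: wv.
- exact: layers_below_next_layer Swv g_ge2 below top.
Qed.

Lemma sse_of_envelope_equiv : envelope_equiv n u v -> strongly_shift_equiv u v.
Proof.
move=> uv; apply: (@sse_of_layers_below n.-1 2 u) => //; first lia.
- exact: sse_refl.
- exact: size_perm_word u_perm.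
move=> h h_gt0 h_lt2 x; have -> : h = 1 by lia.
by rewrite !layer1_letter_at ?(perm_word_pos u_perm) ?(perm_word_pos v_perm) ?Sv ?(size_perm_word u_perm).
Qed.

End Reconstruction.

Unset Implicit Arguments.
Set Strict Implicit.

Theorem mainTheorem12 (n : nat) (u v : seq nat) :
  (1 <= n)%N -> is_perm_word n u -> is_perm_word n v ->
  (strongly_shift_equiv u v <-> ss_wilf_equiv u v).
Proof.
move=> n_gt0 u_perm v_perm.
have Su := size_perm_word u_perm; have Sv := size_perm_word v_perm.
split=> [uv | /(envelope_equiv_of_ss_wilf Su Sv) uv].
  by apply: ss_wilf_of_sse uv; rewrite Su.
exact: sse_of_envelope_equiv n_gt0 u_perm v_perm uv.
Qed.
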